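(* Let $K$ be a finite field and $|\cdot|:K\to R$ a multiplicative generalized seminorm. Then $|\cdot|$ is multiplicatively equivalent to the trivial seminorm $|\cdot|_0:K\to\{0,1\}$, given by $|0|_0=0$ and $|x|_0=1$ for $x\neq0$.
   Context: A halo is a commutative unital semiring with a partial order compatible with $+$ and $\cdot$; an aura is a halo whose semiring is a semifield; positive means $0<1$. A generalized seminorm on a ring $A$ is a map $|\cdot|:A\to R$ into a positive totally ordered aura with $|0|=0,|1|=1$, $|a+b|\le|a|+|b|$, $|ab|\le|a||b|$; multiplicative if $|ab|=|a||b|$. The target $\{0,1\}$ is the halo with $0<1$, $1+1=1$ and usual multiplication. Two seminorms $|\cdot|_1,|\cdot|_2$ on $A$ are multiplicatively equivalent if for all $a,b,c\in A$: $|a|_1|c|_1\le|b|_1\iff|a|_2|c|_2\le|b|_2$. *)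

From HB Require Import structures.
From mathcomp Require Import all_boot all_order all_algebra all_field.
Set Implicit Arguments. Unset Strict Implicit. Unset Printing Implicit Defensive.
Import GRing.Theory.

Record tot_aura := TotAura {
  car :> Type;
  azero : car;
  aone : car;
  aadd : car -> car -> car;
  amul : car -> car -> car;
  ale : car -> car -> Prop;
  aaddA : forall x y z, aadd x (aadd y z) = aadd (aadd x y) z;
  aaddC : forall x y, aadd x y = aadd y x;
  aadd0 : forall x, aadd azero x = x;
  amulA : forall x y z, amul x (amul y z) = amul (amul x y) z;
  amulC : forall x y, amul x y = amul y x;
  amul1 : forall x, amul aone x = x;
  amulD : forall x y z, amul x (aadd y z) = aadd (amul x y) (amul x z);
  amul0 : forall x, amul azero x = azero;
  ainv : forall x, x <> azero -> exists y, amul x y = aone;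
  ale_refl : forall x, ale x x;
  ale_anti : forall x y, ale x y -> ale y x -> x = y;
  ale_trans : forall x y z, ale x y -> ale y z -> ale x z;
  ale_total : forall x y, ale x y \/ ale y x;
  ale_add : forall x y z, ale x y -> ale (aadd x z) (aadd y z);
  ale_mul : forall x y z, ale x y -> ale (amul x z) (amul y z);
  apos : ale azero aone /\ azero <> aone
}.

Definition bool_aura : tot_aura.
Proof.
refine (@TotAura bool false true orb andb (fun a b => a ==> b) _ _ _ _ _ _ _ _ _ _ _ _ _ _ _ _).
all: try by repeat case.
all: try by (case=> // _; exists true).
all: try by (move=> [] [] //=).
all: try by (move=> [] [] [] //=).
all: by move=> [] []; auto.
Defined.

Definition mult_gen_seminorm (A : pzRingType) (R : tot_aura) (v : A -> R) : Prop :=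
  [/\ v 0%R = azero R, v 1%R = aone R,
      forall a b, ale (v (a + b)%R) (aadd (v a) (v b)),
      forall a b, ale (v (a * b)%R) (amul (v a) (v b))
    & forall a b, v (a * b)%R = amul (v a) (v b)].

Definition mult_equiv (A : pzRingType) (R1 R2 : tot_aura)
  (v1 : A -> R1) (v2 : A -> R2) : Prop :=
  forall a b c : A,
    ale (amul (v1 a) (v1 c)) (v1 b) <-> ale (amul (v2 a) (v2 c)) (v2 b).

Definition triv_seminorm (K : fieldType) (x : K) : bool_aura := x != 0%R.

(** A multiplicative seminorm on a finite field [K] is constant on [K^*]: for
    [x != 0], [|x|] is invertible since [|x| |x^-1| = 1], and [x^#|K| = x]
    gives [|x|^(#|K|-1) = 1].  In a totally ordered monoid the powers of an
    element [a] move monotonically away from [1] (down if [a <= 1], up if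
    [1 <= a]), so [|x| = 1]. *)
From mathcomp Require Import all_boot all_order all_algebra all_field.
Import GRing.Theory.

Section TotAuraTheory.
Variable R : tot_aura.

Fixpoint apow (a : R) (n : nat) : R :=
  if n is k.+1 then amul a (apow a k) else aone R.

Lemma amulr1 (x : R) : amul x (aone R) = x.
Proof. by rewrite amulC amul1. Qed.

Lemma aone_neq0 : aone R <> azero R.
Proof. by case: (apos R) => _ /nesym. Qed.

Lemma aone_nle0 : ~ ale (aone R) (azero R).
Proof. by case: (apos R) => le01 ne01 le10; apply: ne01; apply: ale_anti. Qed.

Lemma amulI (a b c : R) : a <> azero R -> amul a b = amul a c -> b = c.
Proof.
move=> /ainv [a' aa'] eq_ab_ac.
by rewrite -(amul1 b) -(amul1 c) -aa' (amulC a) -!amulA eq_ab_ac.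
Qed.

Lemma apowS_le (a : R) k : ale a (aone R) -> ale (apow a k.+1) a.
Proof.
move=> le_a1; elim: k => [|k IH] /=; first by rewrite amulr1; apply: ale_refl.
have le_aa_a : ale (amul a a) a by rewrite -{3}(amul1 a); apply: ale_mul.
by apply: ale_trans le_aa_a; rewrite amulC; apply: ale_mul.
Qed.

Lemma apowS_ge (a : R) k : ale (aone R) a -> ale a (apow a k.+1).
Proof.
move=> le_1a; elim: k => [|k IH] /=; first by rewrite amulr1; apply: ale_refl.
have le_a_aa : ale a (amul a a) by rewrite -{1}(amul1 a); apply: ale_mul.
by apply: ale_trans le_a_aa _; rewrite amulC; apply: ale_mul.
Qed.

Lemma apowS_eq1 (a : R) k : apow a k.+1 = aone R -> a = aone R.
Proof.
move=> ak1; case: (ale_total a (aone R)) => [le_a1|le_1a].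
  by apply: (ale_anti le_a1); rewrite -ak1; apply: apowS_le.
by apply: (ale_anti _ le_1a); rewrite -ak1; apply: apowS_ge.
Qed.

End TotAuraTheory.

Arguments apow {R}.
Arguments aone_nle0 {R}.

Section MultiplicativeNorm.
Variables (R : tot_aura) (K : unitRingType) (v : K -> R).
Hypotheses (v1 : v 1%R = aone R) (vM : forall a b, v (a * b)%R = amul (v a) (v b)).

Lemma norm_exp x n : v (x ^+ n)%R = apow (v x) n.
Proof. by elim: n => [|n IH]; rewrite ?expr0 ?v1 // exprS vM IH. Qed.

Lemma norm_unit_neq0 x : x \is a GRing.unit -> v x <> azero R.
Proof.
move=> x_unit vx0; apply: (@aone_neq0 R).
by rewrite -v1 -(mulrV x_unit) vM vx0 amul0.
Qed.

End MultiplicativeNorm.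

Lemma finfield_norm_eq1 (K : finFieldType) (R : tot_aura) (v : K -> R) :
    v 1%R = aone R -> (forall a b, v (a * b)%R = amul (v a) (v b)) ->
  forall x : K, x != 0%R -> v x = aone R.
Proof.
move=> v1 vM x x_neq0.
have vx_neq0 : v x <> azero R by apply: norm_unit_neq0; rewrite ?unitfE.
have /(congr1 v) := expf_card x.
rewrite -(subnKC (card_finNzRing_gt1 K)) norm_exp //= add0n => vx_pow.
apply: (@apowS_eq1 _ _ (#|K| - 2)); apply: (@amulI _ (v x)) => //.
by rewrite amulr1.
Qed.

Lemma mult_equiv_triv_seminorm (K : fieldType) (R : tot_aura) (v : K -> R) :
    (forall x, v x = if x == 0%R then azero R else aone R) ->
  mult_equiv v (@triv_seminorm K).
Proof.
move=> vE a b c; rewrite /triv_seminorm !vE.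
have le01 := (apos R).1; have le00 := ale_refl (azero R).
have le11 := ale_refl (aone R).
case: (a == 0%R); case: (b == 0%R); case: (c == 0%R);
  rewrite /= ?amul0 ?amul1; split=> // le10; case: (aone_nle0 le10).
Qed.

Theorem lemma3p8 (K : finFieldType) (R : tot_aura) (v : K -> R) :
  mult_gen_seminorm v -> mult_equiv v (@triv_seminorm K).
Proof.
case=> v0 v1 _ _ vM; apply: mult_equiv_triv_seminorm => x.
by case: eqP => [->|/eqP]; last exact: finfield_norm_eq1.
Qed.
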